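(* Let $G$ be a network and fix an oriented edge $e$ of $G$. Let $\mathsf{FUSF}_G^e$ denote the joint distribution of a sample $\mathfrak F$ of $\mathsf{FUSF}_G$ and of the update $U(\mathfrak F,e)$. Then for every event $\mathscr A\subseteq\{0,1\}^{E(G)}$, \[ \mathsf{FUSF}_G(\mathfrak F \in \mathscr A) \geq \frac{c(e)}{c(e^-)}\,\mathsf{FUSF}_G^e(U(\mathfrak F,e) \in \mathscr A).\]
   Context: A network is a locally finite connected (infinite) multigraph $G=(V,E)$ with conductances $c:E\to(0,\infty)$; $c(u)$ is the sum of conductances of edges emanating from $u$. For a finite network $H$, $\mathsf{UST}_H$ gives each spanning tree probability proportional to the product of its conductances. For an exhaustion $V_n$, $G_n$ is the induced subnetwork and $\mathsf{FUSF}_G$ the weak limit of $\mathsf{UST}_{G_n}$. For a spanning tree $t$ and non-loop oriented edge $e$, $D(t,e)$ is the first edge on the path from $e^-$ to $e^+$ in $t$; if $T_n\sim\mathsf{UST}_{G_n}$ then $(T_n,D(T_n,e))$ converges in distribution to a pair $(\mathfrak F,D(e))$ with $\mathfrak F\sim\mathsf{FUSF}_G$. The update $U(f,e)$ is: $f$ if $e$ is a self-loop or $e\in f$; otherwise $f\cup\{e\}\setminus D(e)$ with $D(e)$ sampled from its conditional law given $\mathfrak F=f$, independently of everything else. *)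

From HB Require Import structures.
From mathcomp Require Import all_boot all_order all_algebra.
From mathcomp Require Import all_classical all_reals all_analysis.
Set Implicit Arguments.
Unset Strict Implicit.
Unset Printing Implicit Defensive.
Import Order.TTheory GRing.Theory Num.Theory.

Local Open Scope classical_set_scope.
Local Open Scope ring_scope.

(* Edge types: countable and pointed (pointedness is needed for the
   measurable-space constructions; it is harmless since the theorem fixes an
   edge anyway). *)
HB.structure Definition PointedCount := {T of Pointed T & Countable T}.
Notation pointedCountType := PointedCount.type.

Section Network.
Variables (R : realType) (V : countType) (E : pointedCountType).
(* A multigraph: every edge x has endpoints src x and tgt x (self-loops and
   parallel edges allowed).  Edge sets / configurations are maps E -> bool. *)
Variables (src tgt : E -> V).

Definition joins (d : E) (x z : V) : Prop :=
  (src d = x /\ tgt d = z) \/ (src d = z /\ tgt d = x).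

(* a walk from x using only edges in S: list of (edge, next vertex) *)
Fixpoint walk (S : E -> bool) (x : V) (p : seq (E * V)) : Prop :=
  match p with
  | [::] => True
  | (d, z) :: p' => S d /\ joins d x z /\ walk S z p'
  end.

Definition walk_end (x : V) (p : seq (E * V)) : V := last x (unzip2 p).

Definition has_cycle (S : E -> bool) : Prop :=
  exists (x : V) (p : seq (E * V)),
    p != [::] /\ walk S x p /\ walk_end x p = x /\
    uniq (unzip1 p) /\ uniq (unzip2 p).

Definition connected_on (S : E -> bool) (W : V -> Prop) : Prop :=
  forall u v, W u -> W v -> exists p, walk S u p /\ walk_end u p = v.

(* Network hypotheses: positive conductances, locally finite (adj u lists,
   without repetition, exactly the edges incident to u), connected, infinite *)
Definition is_network (c : E -> R) (adj : V -> seq E) : Prop :=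
  [/\ forall x, 0 < c x,
      forall u, uniq (adj u) /\
                forall x, (x \in adj u) = (src x == u) || (tgt x == u),
      connected_on (fun _ => true) (fun _ => True)
    & ~ exists s : seq V, forall v, v \in s].

(* c(u): sum of conductances of the edges at u (a self-loop counted once) *)
Definition cond (c : E -> R) (adj : V -> seq E) (u : V) : R :=
  \sum_(x <- adj u) c x.

Definition induced (W : seq V) (x : E) : bool := (src x \in W) && (tgt x \in W).

Definition is_exhaustion (Vn : nat -> seq V) : Prop :=
  [/\ forall n v, v \in Vn n -> v \in Vn n.+1,
      forall v, exists n, v \in Vn n
    & forall n, connected_on (induced (Vn n)) (fun v => v \in Vn n)].

Definition induced_edges (adj : V -> seq E) (W : seq V) : seq E :=
  undup [seq x <- flatten [seq adj u | u <- W] | induced W x].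

Definition is_spanning_tree (W : seq V) (S : E -> bool) : Prop :=
  [/\ forall x, S x -> induced W x,
      connected_on S (fun v => v \in W)
    & ~ has_cycle S].

Definition cfg_of (s : seq E) (t : {set seq_sub s}) : E -> bool :=
  fun x => [exists y in t, ssval y == x].

(* oriented edge (x, o): tail e^- and head e^+ *)
Definition tail (x : E) (o : bool) : V := if o then src x else tgt x.
Definition head (x : E) (o : bool) : V := if o then tgt x else src x.

Definition first_edge (S : E -> bool) (x y : V) (d : E) : Prop :=
  exists p, [/\ walk S x p, walk_end x p = y, uniq (x :: unzip2 p)
              & ohead (unzip1 p) = Some d].

(* D(t, e) for the oriented edge (e, o); for a self-loop D is irrelevant and
   is set to e by convention *)
Definition Drel (S : E -> bool) (e : E) (o : bool) (d : E) : Prop :=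
  if tail e o == head e o then d = e else first_edge S (tail e o) (head e o) d.

(* update U(f, e) given the value d of D(e) *)
Definition update (e : E) (o : bool) (f : E -> bool) (d : E) : E -> bool :=
  if (tail e o == head e o) || f e then f
  else fun x => ((x == e) || f x) && (x != d).

End Network.

(* Measurable spaces: {0,1}^E with the product sigma-algebra (generated by
   the coordinate events), and {0,1}^E x E (E discrete). *)
Definition cyl_gen (E : pointedCountType) : set (set (E -> bool)) :=
  fun A => exists (i : E) (b : bool), A = [set f | f i = b].
Definition Cfg (E : pointedCountType) := g_sigma_algebraType (@cyl_gen E).

Definition joint_gen (E : pointedCountType) : set (set ((E -> bool) * E)) :=
  fun A => (exists (i : E) (b : bool), A = [set p | p.1 i = b]) \/
           (exists d : E, A = [set p | p.2 = d]).
Definition JT (E : pointedCountType) := g_sigma_algebraType (@joint_gen E).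

Section UST.
Variables (R : realType) (V : countType) (E : pointedCountType).
Variables (src tgt : E -> V) (c : E -> R) (adj : V -> seq E).

(* UST_{G_W}-probability that B1 is contained in T, B0 is disjoint from T,
   and D(T, e) = d *)
Definition ust_pair_cyl (W : seq V) (e : E) (o : bool) (B1 B0 : seq E) (d : E)
  : R :=
  let s := induced_edges src tgt adj W in
  (\sum_(t : {set seq_sub s} |
      `[< is_spanning_tree src tgt W (cfg_of t) /\
          all (cfg_of t) B1 /\ ~~ has (cfg_of t) B0 /\
          Drel src tgt (cfg_of t) e o d >])
      \prod_(y in t) c (ssval y)) /
  (\sum_(t : {set seq_sub s} | `[< is_spanning_tree src tgt W (cfg_of t) >])
      \prod_(y in t) c (ssval y)).

Definition joint_cyl (B1 B0 : seq E) (d : E) : set (JT E) :=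
  [set p | all p.1 B1 /\ ~~ has p.1 B0 /\ p.2 = d].

(* nu is the law of the limit pair (FUSF sample, D(e)) of
   (T_n, D(T_n, e)), T_n ~ UST_{G_n}: convergence in distribution,
   expressed on the (convergence-determining) cylinder events *)
Definition is_FUSF_pair_limit (Vn : nat -> seq V) (e : E) (o : bool)
  (nu : probability (JT E) R) : Prop :=
  forall (B1 B0 : seq E) (d : E),
    (fun n => (ust_pair_cyl (Vn n) e o B1 B0 d)%:E) @ \oo
      --> nu (joint_cyl B1 B0 d).

End UST.

(* Work first in a finite subnetwork G_W and let e = (x, y) with x <> y.  If a spanning
   tree T avoids e and d = D(T, e) is the first edge of its path from x to y, then
   T + e - d is a spanning tree containing e, of weight w(T) c(e) / c(d), from which
   T is recovered given d.  Hence, for every edge d <> e at x,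
     c(e) UST(e \notin T, D = d, U(T) \in A) <= c(d) UST(e \in T, T \in A),
   while U(T) = T when e \in T; summing over the edges at x gives
     c(e) UST(U(T) \in A) <= c(x) UST(T \in A).
   D(T, e) is always an edge at x, so for an event A depending on finitely many edges
   both sides are finite sums of cylinder probabilities and pass to the limit; the
   monotone class theorem then extends the inequality to all measurable A.  Only
   positivity and local finiteness of the network enter: the inequality holds along
   any sequence of finite vertex sets for which the pairs (T_n, D(T_n, e)) converge. *)

From Pilot Require Import Defs.
From HB Require Import structures.
From mathcomp Require Import all_boot all_order all_algebra.
From mathcomp Require Import all_classical all_reals all_analysis.
Import Order.TTheory GRing.Theory Num.Theory.
Local Open Scope classical_set_scope.
Local Open Scope ring_scope.
Set Implicit Arguments.
Unset Strict Implicit.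
Unset Printing Implicit Defensive.

Section Walks.
Variables (V : countType) (E : pointedCountType) (src tgt : E -> V).

Local Notation walk := (walk src tgt).
Local Notation joins := (joins src tgt).
Local Notation has_cycle := (has_cycle src tgt).

Definition linked (S : E -> bool) (x y : V) : Prop :=
  exists p, walk S x p /\ walk_end x p = y.

Definition del_edge (S : E -> bool) (d : E) : E -> bool := fun g => S g && (g != d).

Lemma walk_cat (S : E -> bool) x p1 p2 :
  walk S x (p1 ++ p2) <-> walk S x p1 /\ walk S (walk_end x p1) p2.
Proof.
elim: p1 x => [|[d z] p1 IH] x /=; first by split => // [[]].
by rewrite IH /walk_end /=; tauto.
Qed.

Lemma walk_end_cat (x : V) (p1 p2 : seq (E * V)) :
  walk_end x (p1 ++ p2) = walk_end (walk_end x p1) p2.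
Proof. by rewrite /walk_end /unzip2 map_cat last_cat. Qed.

Lemma walk_end_cons (x : V) (d : E) (z : V) (p : seq (E * V)) :
  walk_end x ((d, z) :: p) = walk_end z p.
Proof. by []. Qed.

Lemma walk_mem_edge (S : E -> bool) x p g : walk S x p -> g \in unzip1 p -> S g.
Proof.
elim: p x => [|[d z] p IH] x //= [Sd [_ W]]; rewrite inE => /orP[/eqP->//|].
exact: IH W.
Qed.

Lemma walk_restrict (S S' : E -> bool) x p :
  walk S x p -> (forall g, g \in unzip1 p -> S' g) -> walk S' x p.
Proof.
elim: p x => [|[d z] p IH] x //= [_ [J W]] sub; split; first exact/sub/mem_head.
by split => //; apply: IH W _ => g gp; apply: sub; rewrite inE gp orbT.
Qed.

Lemma walk_subset (S S' : E -> bool) x p :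
  (forall g, S g -> S' g) -> walk S x p -> walk S' x p.
Proof. by move=> SS' W; apply: (walk_restrict W) => g /(walk_mem_edge W) /SS'. Qed.

Lemma walk_edge_endpoints (S : E -> bool) x p g : walk S x p -> g \in unzip1 p ->
  (src g \in x :: unzip2 p) && (tgt g \in x :: unzip2 p).
Proof.
elim: p x => [|[d z] p IH] x //= [_ [J W]]; rewrite inE => /orP[/eqP->|gp].
  by case: J => [[<- <-]|[<- <-]]; rewrite !inE !eqxx ?orbT.
by move/andP: (IH _ W gp); rewrite !inE => -[-> ->]; rewrite !orbT.
Qed.

Lemma walk_end_closed (P : V -> Prop) (S : E -> bool) x p :
  (forall g, S g -> P (src g) /\ P (tgt g)) -> walk S x p -> P x -> P (walk_end x p).
Proof.
move=> SP; elim: p x => [|[d z] p IH] x //= [Sd [J W]] Px.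
by apply: IH W _; move: Px; case: J => [[<- <-]|[<- <-]]; have := SP _ Sd; tauto.
Qed.

Lemma simple_walk_uniq_edges (S : E -> bool) x p :
  walk S x p -> uniq (x :: unzip2 p) -> uniq (unzip1 p).
Proof.
elim: p x => [|[d z] p IH] x //= [_ [J W]] /andP[xp u].
rewrite (IH _ W u) andbT; apply/negP => /(walk_edge_endpoints W) /andP[sd td].
by case: J => [[dx _]|[_ dx]]; rewrite dx in sd td; rewrite ?sd ?td in xp.
Qed.

Lemma walk_avoid_vertex (S : E -> bool) g x z q : walk S z q ->
  x \notin z :: unzip2 q -> (src g == x) || (tgt g == x) -> walk (del_edge S g) z q.
Proof.
move=> W xq gx; apply: (walk_restrict W) => h hq; rewrite /del_edge (walk_mem_edge W hq).
apply/eqP => hg; subst h; move/andP: (walk_edge_endpoints W hq) => [sq tq].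
by case/orP: gx => /eqP gx; rewrite gx (negbTE xq) in sq tq.
Qed.

(* If the shortened tail revisits [x], restart it after that visit. *)
Lemma walk_shorten (S : E -> bool) x p : walk S x p -> exists q,
  [/\ walk S x q, walk_end x q = walk_end x p, uniq (x :: unzip2 q)
    & {subset unzip1 q <= unzip1 p}].
Proof.
elim: p x => [|[d z] p IH] x /=; first by move=> _; exists [::].
case=> Sd [J W]; have [q [Wq Eq Uq Sq]] := IH _ W.
have Sq' : {subset unzip1 q <= d :: unzip1 p}.
  by move=> g /Sq gp; rewrite inE gp orbT.
rewrite walk_end_cons -Eq.
have [xz|xz] := eqVneq x z; first by subst z; exists q.
case: (boolP (x \in unzip2 q)) => xq; last first.
  exists ((d, z) :: q); split => //=; first by rewrite inE negb_or xz xq.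
  by move=> g; rewrite !inE => /orP[->//|/Sq ->]; rewrite orbT.
set l := unzip2 q; set i := index x l.
have il : (i < size l)%N by rewrite index_mem.
have Ht : walk_end z (take i.+1 q) = x.
  by rewrite /walk_end /unzip2 map_take -/l (take_nth z il) last_rcons nth_index.
have Hq := cat_take_drop i.+1 q.
exists (drop i.+1 q); split.
- have /walk_cat[_] : walk S z (take i.+1 q ++ drop i.+1 q) by rewrite Hq.
  by rewrite Ht.
- by rewrite -{2}Hq walk_end_cat Ht.
- rewrite /= /unzip2 map_drop -/(unzip2 q) -/l.
  have : uniq l by case/andP: Uq.
  rewrite -{1}(cat_take_drop i.+1 l) cat_uniq => /and3P[_ Hl ->].
  rewrite andbT; apply: contra Hl => xd; apply/hasP.
  by exists x => //; rewrite (take_nth z il) mem_rcons inE nth_index ?eqxx.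
- by move=> g; rewrite /unzip1 map_drop => /mem_drop; apply: Sq'.
Qed.

Lemma joins_sym d x z : joins d x z -> joins d z x.
Proof. by rewrite /Defs.joins; tauto. Qed.

Lemma joins_eq d x z a b : joins d x z -> joins d a b ->
  (x = a /\ z = b) \/ (x = b /\ z = a).
Proof.
by rewrite /Defs.joins; case=> [[<- <-]|[<- <-]] [[<- <-]|[<- <-]]; tauto.
Qed.

Lemma joins_loop d x : joins d x x -> src d = tgt d.
Proof. by case=> [[-> ->]|[-> ->]]. Qed.

Lemma linked_refl (S : E -> bool) x : linked S x x.
Proof. by exists [::]. Qed.

Lemma linked_trans (S : E -> bool) x y z : linked S x y -> linked S y z -> linked S x z.
Proof.
move=> [p [Wp <-]] [q [Wq <-]]; exists (p ++ q).
by rewrite walk_end_cat walk_cat.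
Qed.

Lemma linked_edge (S : E -> bool) d x z : S d -> joins d x z -> linked S x z.
Proof. by move=> Sd J; exists [:: (d, z)]. Qed.

Lemma linked_sym (S : E -> bool) x y : linked S x y -> linked S y x.
Proof.
move=> [p [Wp <-]]; elim: p x Wp => [|[d z] p IH] x /=; first by move=> _; exists [::].
case=> Sd [J W]; apply: linked_trans (IH _ W) _.
exact: linked_edge Sd (joins_sym J).
Qed.

Lemma linked_subset (S S' : E -> bool) x y :
  (forall g, S g -> S' g) -> linked S x y -> linked S' x y.
Proof. by move=> SS' [p [W <-]]; exists p; split => //; exact: walk_subset W. Qed.

Lemma linked_of_edges (S S' : E -> bool) x y :
  (forall g, S g -> linked S' (src g) (tgt g)) -> linked S x y -> linked S' x y.
Proof.
move=> SS' [p [Wp <-]]; elim: p x Wp => [|[d z] p IH] x /=.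
  by move=> _; exact: linked_refl.
case=> Sd [J W]; apply: linked_trans (IH _ W).
by have := SS' _ Sd; case: J => [[<- <-]|[<- <-]] //; exact: linked_sym.
Qed.

Lemma linked_add_edge (S : E -> bool) e a b x y : joins e a b ->
  linked (fun g => (g == e) || S g) x y ->
  linked S x y \/ (linked S x a /\ linked S b y) \/ (linked S x b /\ linked S a y).
Proof.
move=> Je [p [Wp <-]]; elim: p x Wp => [|[g z] p IH] x /=.
  by move=> _; left; exact: linked_refl.
case=> Sg [J W]; have := IH _ W; rewrite walk_end_cons.
case/orP: Sg => [/eqP ge|Sg].
  subst g; have Ra := linked_refl S a; have Rb := linked_refl S b.
  by case: (joins_eq J Je) => [[-> ->]|[-> ->]]; tauto.
have Lxz : linked S x z by exact: linked_edge Sg J.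
case=> [H|[[H1 H2]|[H1 H2]]].
- by left; exact: linked_trans Lxz H.
- by right; left; split => //; exact: linked_trans Lxz H1.
- by right; right; split => //; exact: linked_trans Lxz H1.
Qed.

Lemma loop_has_cycle (S : E -> bool) d : S d -> src d = tgt d -> has_cycle S.
Proof. by move=> Sd sd; exists (src d), [:: (d, src d)]; do !split => //; left. Qed.

Lemma edge_linked_has_cycle (S : E -> bool) d x z : S d -> joins d x z -> x != z ->
  linked (del_edge S d) z x -> has_cycle S.
Proof.
move=> Sd J xz [p [Wp Ep]].
have [q [Wq Eq Uq _]] := walk_shorten Wp.
exists x, ((d, z) :: q); split => //=.
split; first by do !split => //; apply: (walk_subset _ Wq) => g /andP[].
split; first by rewrite walk_end_cons Eq.
split => //; rewrite (simple_walk_uniq_edges Wq Uq) andbT.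
by apply/negP => /(walk_mem_edge Wq); rewrite /del_edge eqxx andbF.
Qed.

Lemma has_cycle_edge (S : E -> bool) : has_cycle S ->
  exists g x z, [/\ S g, joins g x z & linked (del_edge S g) z x].
Proof.
case=> x [[|[g z] p] [//= _ [[Sg [J W]] [Ee [/andP[gp _] _]]]]].
exists g, x, z; split => //; exists p; split => //.
apply: (walk_restrict W) => h hp; rewrite /del_edge (walk_mem_edge W hp).
by apply: contraNneq gp => <-.
Qed.

Lemma first_edge_split (S : E -> bool) x y d : first_edge src tgt S x y d ->
  exists z, [/\ S d, joins d x z & linked (del_edge S d) z y].
Proof.
case=> [[|[g z] q] [//= [Sg [J W]] Ee U [<-]]].
exists z; split => //; exists q; split => //.
apply: (walk_avoid_vertex (x := x) W); first by case/and3P: U.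
by case: J => [[-> _]|[_ ->]]; rewrite eqxx ?orbT.
Qed.

Lemma first_edge_direct (S : E -> bool) x y e : S e -> joins e x y -> x != y ->
  first_edge src tgt S x y e.
Proof. by move=> Se Je xy; exists [:: (e, y)]; split => //=; rewrite inE xy. Qed.

Definition exchange (T : E -> bool) (e d : E) : E -> bool :=
  fun g => ((g == e) || T g) && (g != d).

Section Exchange.
Variables (T : E -> bool) (e d : E) (x y z : V).
Hypotheses (T_acyclic : ~ has_cycle T) (Td : T d)
  (Jd : joins d x z) (Lzy : linked (del_edge T d) z y) (Je : joins e x y)
  (nTe : ~~ T e).

Lemma tail_head_unlinked : ~ linked (del_edge T d) x y.
Proof.
move=> Lxy; apply: T_acyclic.
have [xz|xz] := eqVneq x z; first by subst z; exact: loop_has_cycle Td (joins_loop Jd).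
exact: (edge_linked_has_cycle Td Jd xz (linked_trans Lzy (linked_sym Lxy))).
Qed.

(* A cycle of the exchanged graph through [e] would link [x] and [y] in [T - d]. *)
Lemma exchange_acyclic : ~ has_cycle (exchange T e d).
Proof.
move=> /has_cycle_edge [g [a [b [/andP[/orP[/eqP ge|Tg] gd] Jg Lg]]]].
  subst g; apply: tail_head_unlinked.
  have Lba : linked (del_edge T d) b a.
    apply: linked_subset Lg => h /andP[/andP[/orP[/eqP->|Th] hd] he].
      by rewrite eqxx in he.
    by rewrite /del_edge Th hd.
  by case: (joins_eq Jg Je) => [[<- <-]|[<- <-]] //; exact: linked_sym.
have [ab|ab] := eqVneq a b.
  by subst b; apply: T_acyclic; exact: loop_has_cycle Tg (joins_loop Jg).
have Lg' : linked (fun h => (h == e) || del_edge (del_edge T d) g h) b a.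
  apply: linked_subset Lg => h /andP[/andP[/orP[/eqP->|Th] hd] hg]; first by rewrite eqxx.
  by rewrite /del_edge Th hd hg orbT.
have sub h : del_edge (del_edge T d) g h -> del_edge T d h.
  by rewrite /del_edge => /andP[/andP[-> ->]].
have Lab : linked (del_edge T d) a b by apply: (linked_edge _ Jg); rewrite /del_edge Tg gd.
case: (linked_add_edge Je Lg') => [H|[[H1 H2]|[H1 H2]]].
- apply: T_acyclic; apply: (edge_linked_has_cycle Tg Jg ab).
  by apply: linked_subset H => h; rewrite /del_edge => /andP[/andP[-> _] ->].
- apply: tail_head_unlinked; apply: linked_trans (linked_sym (linked_subset sub H1)) _.
  exact: linked_trans (linked_sym Lab) (linked_sym (linked_subset sub H2)).
- apply: tail_head_unlinked; apply: linked_trans (linked_subset sub H2) _.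
  exact: linked_trans Lab (linked_subset sub H1).
Qed.

Lemma exchange_linked u v : linked T u v -> linked (exchange T e d) u v.
Proof.
have ed : e != d by apply: contraNneq nTe => ->.
apply: linked_of_edges => f Tf; have [fd|fd] := eqVneq f d; last first.
  by apply: (@linked_edge _ f); [rewrite /exchange Tf fd orbT | left].
subst f; have Lxz : linked (exchange T e d) x z.
  apply: (@linked_trans _ _ y).
    by apply: (linked_edge _ Je); rewrite /exchange eqxx ed.
  apply: linked_sym; apply: linked_subset Lzy => h /andP[Th hd].
  by rewrite /exchange Th hd orbT.
by case: Jd => [[-> ->]|[-> ->]] //; exact: linked_sym.
Qed.

End Exchange.

End Walks.

Lemma ler_sum_subpred (R : numDomainType) (I : finType) (P Q : pred I) (F : I -> R) :
  (forall i, P i -> Q i) -> (forall i, Q i -> 0 <= F i) ->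
  \sum_(i | P i) F i <= \sum_(i | Q i) F i.
Proof.
move=> PQ F0; rewrite [leLHS]big_mkcond [leRHS]big_mkcond; apply: ler_sum => i _.
by case: (boolP (P i)) => [/PQ ->//|_]; case: (boolP (Q i)) => // /F0.
Qed.

Section FiniteNetwork.
Variables (V : countType) (E : pointedCountType) (src tgt : E -> V).
Variables (adj : V -> seq E) (W : seq V).
Hypothesis adj_incident : forall u, uniq (adj u) /\
  forall x, (x \in adj u) = (src x == u) || (tgt x == u).

Local Notation s := (induced_edges src tgt adj W).
Local Notation cfg := (@cfg_of E s).

Lemma mem_cfg (t : {set seq_sub s}) (y : seq_sub s) : (y \in t) = cfg t (ssval y).
Proof.
apply/idP/existsP => [yt|[y' /andP[y't /eqP yy']]]; first by exists y; rewrite yt eqxx.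
by have -> : y = y' by apply: val_inj.
Qed.

Lemma eq_cfg_set (t1 t2 : {set seq_sub s}) : cfg t1 =1 cfg t2 -> t1 = t2.
Proof. by move=> eq12; apply/setP => y; rewrite !mem_cfg eq12. Qed.

Lemma induced_mem_edges (x : E) : Defs.induced src tgt W x -> x \in s.
Proof.
move=> Wx; rewrite /induced_edges mem_undup mem_filter Wx /=.
apply/flatten_mapP; exists (src x); first by case/andP: Wx.
by rewrite (adj_incident (src x)).2 eqxx.
Qed.

Lemma mem_edges_induced (x : E) : x \in s -> Defs.induced src tgt W x.
Proof. by rewrite /induced_edges mem_undup mem_filter => /andP[]. Qed.

(* [t + e - d], where [ye] is [e] seen as an edge of [G_W]. *)
Definition swap (ye : seq_sub s) (d : E) (t : {set seq_sub s}) : {set seq_sub s} :=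
  ye |: [set y in t | ssval y != d].

Lemma cfg_swap ye d t x :
  cfg (swap ye d t) x = (x == ssval ye) || (cfg t x && (x != d)).
Proof.
apply/existsP/idP => [[y /andP[]]|].
  rewrite !inE => /orP[/eqP->|/andP[yt yd]] /eqP <-; first by rewrite eqxx.
  by rewrite -mem_cfg yt yd orbT.
case/orP => [/eqP->|/andP[/existsP[y /andP[yt /eqP yx]] xd]].
  by exists ye; rewrite !inE !eqxx.
by exists y; rewrite !inE yt yx xd eqxx orbT.
Qed.

Variables (e : E) (o : bool).
Local Notation x0 := (Defs.tail src tgt e o).
Local Notation y0 := (Defs.head src tgt e o).

Lemma joins_tail_head : joins src tgt e x0 y0.
Proof. by case: o; [left|right]. Qed.

Variables (R : realType) (c : E -> R).
Hypothesis c_gt0 : forall x, 0 < c x.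

Definition weight (t : {set seq_sub s}) : R := \prod_(y in t) c (ssval y).

Definition spanning_treeb (t : {set seq_sub s}) : bool :=
  `[< is_spanning_tree src tgt W (cfg t) >].

Definition Dedge (t : {set seq_sub s}) (d : E) : Prop := Drel src tgt (cfg t) e o d.

Lemma weight_ge0 t : 0 <= weight t.
Proof. by apply: prodr_ge0 => y _; exact: ltW. Qed.

Lemma e_in_adj : e \in adj x0.
Proof. by rewrite (adj_incident x0).2; case: o; rewrite eqxx ?orbT. Qed.

Lemma cond_split : cond c adj x0 = c e + \sum_(d <- adj x0 | d != e) c d.
Proof. by rewrite /cond (bigD1_seq e e_in_adj (adj_incident x0).1). Qed.

Lemma cond_ge : c e <= cond c adj x0.
Proof. by rewrite cond_split lerDl; apply: sumr_ge0 => d _; exact: ltW. Qed.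

Lemma cond_gt0 : 0 < cond c adj x0.
Proof. exact: lt_le_trans (c_gt0 e) cond_ge. Qed.

Section NonLoop.
Hypothesis x0y0 : x0 != y0.

Lemma Dedge_first_edge t d : Dedge t d <-> first_edge src tgt (cfg t) x0 y0 d.
Proof. by rewrite /Dedge /Drel (negbTE x0y0). Qed.

Lemma Dedge_mem t d : Dedge t d -> cfg t d.
Proof. by move=> /Dedge_first_edge /first_edge_split [z []]. Qed.

Lemma update_mem t d : cfg t e -> update src tgt e o (cfg t) d = cfg t.
Proof. by move=> te; rewrite /update te orbT. Qed.

Lemma cfg_swap_update ye d t : ssval ye = e -> d != e -> ~~ cfg t e ->
  cfg (swap ye d t) = update src tgt e o (cfg t) d.
Proof.
move=> ye_e de nte; apply: funext => x.
rewrite /update (negbTE nte) (negbTE x0y0) /= cfg_swap ye_e.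
by have [->|//] := eqVneq x e; rewrite eq_sym de.
Qed.

Lemma first_edge_mem_edges t d : is_spanning_tree src tgt W (cfg t) ->
  first_edge src tgt (cfg t) x0 y0 d -> e \in s.
Proof.
case=> t_induced _ _ /first_edge_split [z [td Jd Lzy]].
have endsW g : cfg t g -> (src g \in W) /\ (tgt g \in W) by move=> /t_induced /andP.
have [x0W zW] : x0 \in W /\ z \in W.
  by have [] := endsW _ td; case: Jd => [[-> ->]|[-> ->]].
have y0W : y0 \in W.
  case: Lzy => p [Wp <-]; apply: (walk_end_closed (P := fun v => v \in W) _ Wp zW).
  by move=> g /andP[/endsW].
by apply: induced_mem_edges; rewrite /Defs.induced; case: o x0W y0W => /= -> ->.
Qed.

Section Swap.
Variables (ye : seq_sub s) (d : E).
Hypotheses (ye_e : ssval ye = e) (de : d != e).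

Lemma swap_spanning_tree t : is_spanning_tree src tgt W (cfg t) -> ~~ cfg t e ->
  first_edge src tgt (cfg t) x0 y0 d -> is_spanning_tree src tgt W (cfg (swap ye d t)).
Proof.
move=> [t_induced t_linked t_acyclic] nte /first_edge_split [z [td Jd Lzy]].
have -> : cfg (swap ye d t) = exchange (cfg t) e d.
  apply: funext => x; rewrite cfg_swap /exchange ye_e.
  by have [->|//] := eqVneq x e; rewrite eq_sym de.
split.
- move=> x /andP[/orP[/eqP->|tx] _]; last exact: t_induced.
  by rewrite -ye_e; apply: mem_edges_induced; exact: ssvalP.
- move=> u v uW vW; have [p Hp] := t_linked u v uW vW.
  by apply: (exchange_linked td Jd Lzy joins_tail_head nte); exists p.
- exact: (exchange_acyclic t_acyclic td Jd Lzy joins_tail_head).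
Qed.

Lemma swap_inj t1 t2 : cfg t1 d -> cfg t2 d -> ~~ cfg t1 e -> ~~ cfg t2 e ->
  swap ye d t1 = swap ye d t2 -> t1 = t2.
Proof.
move=> t1d t2d nt1e nt2e eq12; apply: eq_cfg_set => x.
have [->|xd] := eqVneq x d; first by rewrite t1d t2d.
have [->|xe] := eqVneq x e; first by rewrite (negbTE nt1e) (negbTE nt2e).
by have := congr1 (cfg^~ x) eq12; rewrite !cfg_swap ye_e (negbTE xe) xd !andbT.
Qed.

Lemma swap_weight t : cfg t d -> ~~ cfg t e -> weight (swap ye d t) * c d = weight t * c e.
Proof.
move=> /existsP[yd /andP[ydt /eqP yd_d]] nte.
rewrite /weight /swap big_setU1 /=; last by rewrite inE mem_cfg ye_e (negbTE nte).
rewrite (big_setD1 yd ydt) /= ye_e yd_d.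
have -> : t :\ yd = [set y in t | ssval y != d].
  by apply/setP => y; rewrite !inE andbC -yd_d (inj_eq val_inj).
by rewrite mulrAC -mulrA mulrC.
Qed.

End Swap.

Variable A : (E -> bool) -> Prop.

Local Notation upd t d := (update src tgt e o (cfg t) d).

Let M := \sum_(t | spanning_treeb t && cfg t e && `[< A (cfg t) >]) weight t.

Lemma sum_swap_le d : d != e ->
  c e * (\sum_(t | spanning_treeb t && ~~ cfg t e && `[< Dedge t d /\ A (upd t d) >])
           weight t)
  <= c d * M.
Proof.
move=> de.
set P := (X in \sum_(t | X t) _).
have Pspec t : P t -> [/\ is_spanning_tree src tgt W (cfg t), ~~ cfg t e,
    first_edge src tgt (cfg t) x0 y0 d, cfg t d & A (upd t d)].
  case/andP => /andP[/asboolP ST ->] /asboolP[Dd At].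
  by split => //; [exact/Dedge_first_edge | exact: Dedge_mem].
have M_ge0 : 0 <= M by apply: sumr_ge0 => t _; exact: weight_ge0.
case: (pickP P) => [t0 Pt0|P0]; last first.
  by rewrite big_pred0 // mulr0; apply: mulr_ge0 => //; exact: ltW.
have [ST0 _ fe0 _ _] := Pspec _ Pt0.
pose ye := SeqSub (first_edge_mem_edges ST0 fe0); have ye_e : ssval ye = e by [].
rewrite mulr_sumr (eq_bigr (fun t => c d * weight (swap ye d t))); last first.
  by move=> t /Pspec[_ nte _ td _]; rewrite mulrC -(swap_weight ye_e td nte) mulrC.
rewrite -mulr_sumr; apply: ler_wpM2l; first exact: ltW.
rewrite -(big_imset weight) /=; last first.
  move=> t1 t2 /Pspec[_ nt1e _ t1d _] /Pspec[_ nt2e _ t2d _].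
  exact/(swap_inj ye_e t1d t2d nt1e nt2e).
apply: ler_sum_subpred => [_ /imsetP[t Pt ->]|t _]; last exact: weight_ge0.
case/Pspec: Pt => ST nte fe _ At; rewrite cfg_swap ye_e eqxx andbT.
by apply/andP; split; apply/asboolP; [exact: swap_spanning_tree|rewrite cfg_swap_update].
Qed.

Lemma sum_update_notin_le :
  c e * (\sum_(t | spanning_treeb t && ~~ cfg t e)
           \sum_(d <- adj x0 | `[< Dedge t d /\ A (upd t d) >]) weight t)
  <= (cond c adj x0 - c e) * M.
Proof.
rewrite (eq_bigr (fun t => \sum_(d <- adj x0)
    if `[< Dedge t d /\ A (upd t d) >] then weight t else 0)); last first.
  by move=> t _; rewrite big_mkcond.
rewrite exchange_big mulr_sumr cond_split [c e + _]addrC addrK mulr_suml.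
rewrite [leRHS]big_mkcond /=.
apply: ler_sum => d _; rewrite -big_mkcondr.
have [->|de] := eqVneq d e; last exact: sum_swap_le.
rewrite big_pred0 ?mulr0 // => t; apply/negP => /andP[/andP[_ nte] /asboolP[Dt _]].
by rewrite (Dedge_mem Dt) in nte.
Qed.

Lemma sum_mem_ge :
  M <= \sum_(t | spanning_treeb t && cfg t e)
         \sum_(d <- adj x0 | `[< Dedge t d /\ A (cfg t) >]) weight t.
Proof.
rewrite /M big_mkcondr; apply: ler_sum => t /andP[_ te].
case: asboolP => At; last by apply: sumr_ge0 => d _; exact: weight_ge0.
rewrite big_mkcond (bigD1_seq e e_in_adj (adj_incident x0).1) /= asboolT ?lerDl.
  by apply: sumr_ge0 => d _; case: asboolP => _; rewrite ?weight_ge0.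
by split => //; apply/Dedge_first_edge/first_edge_direct => //; exact: joins_tail_head.
Qed.

(* The finite-volume inequality, multiplied by the partition function of [G_W]. *)
Lemma sum_update_le :
  c e * (\sum_(t | spanning_treeb t)
           \sum_(d <- adj x0 | `[< Dedge t d /\ A (upd t d) >]) weight t)
  <= cond c adj x0 * (\sum_(t | spanning_treeb t)
           \sum_(d <- adj x0 | `[< Dedge t d /\ A (cfg t) >]) weight t).
Proof.
set Q := fun t => \sum_(d <- adj x0 | `[< Dedge t d /\ A (cfg t) >]) weight t.
set R1 := \sum_(t | spanning_treeb t && cfg t e) Q t.
have Q_ge0 t : 0 <= Q t by apply: sumr_ge0 => d _; exact: weight_ge0.
have ce_ge0 : 0 <= c e by exact: ltW.
rewrite (bigID (fun t => cfg t e)) /= mulrDr.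
have -> : \sum_(t | spanning_treeb t && cfg t e)
    \sum_(d <- adj x0 | `[< Dedge t d /\ A (upd t d) >]) weight t = R1.
  by apply: eq_bigr => t /andP[_ te]; apply: eq_bigl => d; rewrite update_mem.
apply: (@le_trans _ _ (c e * R1 + (cond c adj x0 - c e) * R1)).
  rewrite lerD2l; apply: le_trans sum_update_notin_le _.
  by apply: ler_wpM2l sum_mem_ge; rewrite subr_ge0 cond_ge.
rewrite -mulrDl addrC subrK ler_wpM2l ?(le_trans ce_ge0 cond_ge) //.
rewrite [leRHS](bigID (fun t => cfg t e)) /= lerDl.
by apply: sumr_ge0 => t _; exact: Q_ge0.
Qed.

End NonLoop.

End FiniteNetwork.

Section JointEvents.
Variable E : pointedCountType.

Definition determined_by (K : seq E) (Q : (E -> bool) -> Prop) : Prop :=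
  forall f g, {in K, f =1 g} -> Q f -> Q g.

Definition finitary_events : set (set (E -> bool)) :=
  [set B | exists K, determined_by K B].

Definition local_event (B1 B0 : seq E) (Q : (E -> bool) -> Prop) (d : E) : set (JT E) :=
  [set p | all p.1 B1 /\ ~~ has p.1 B0 /\ Q p.1 /\ p.2 = d].

Lemma measurable_edge_state i b : measurable [set p : JT E | p.1 i = b].
Proof. by apply: sub_sigma_algebra; left; exists i, b. Qed.

Lemma measurable_second d : measurable [set p : JT E | p.2 = d].
Proof. by apply: sub_sigma_algebra; right; exists d. Qed.

Lemma joint_cyl_cons1 x B1 B0 d :
  joint_cyl (x :: B1) B0 d = [set p : JT E | p.1 x = true] `&` joint_cyl B1 B0 d.
Proof.
apply/funext => p; apply/propext; rewrite /joint_cyl /setI /=.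
by split => [[/andP[x1 B1p] [H0 Hd]]|[x1 [B1p [H0 Hd]]]]; rewrite ?x1 ?B1p.
Qed.

Lemma joint_cyl_cons0 x B0 d :
  joint_cyl [::] (x :: B0) d = [set p : JT E | p.1 x = false] `&` joint_cyl [::] B0 d.
Proof.
apply/funext => p; apply/propext; rewrite /joint_cyl /setI /=.
by split => [[_ [/norP[/negbTE x0 H0] Hd]]|[x0 [_ [H0 Hd]]]]; rewrite ?x0.
Qed.

Lemma measurable_joint_cyl (B1 B0 : seq E) (d : E) : measurable (joint_cyl B1 B0 d).
Proof.
elim: B1 => [|x B1 IH]; last first.
  by rewrite joint_cyl_cons1; exact: measurableI (measurable_edge_state _ _) IH.
elim: B0 => [|x B0 IH]; last first.
  by rewrite joint_cyl_cons0; exact: measurableI (measurable_edge_state _ _) IH.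
rewrite (_ : joint_cyl _ _ d = [set p | p.2 = d]); first exact: measurable_second.
by apply/funext => p; apply/propext; rewrite /joint_cyl /=; split => [[_ [_ ->]]|->].
Qed.

Lemma local_event_const (B1 B0 : seq E) (Q : (E -> bool) -> Prop) d :
  determined_by [::] Q ->
  local_event B1 B0 Q d = if `[< Q (fun=> false) >] then joint_cyl B1 B0 d else set0.
Proof.
move=> QK; case: asboolP => Q0; apply/seteqP; split => p /=.
- by case=> [? [? [_ ?]]].
- by case=> [? [? ?]]; do !split => //; exact: QK Q0.
- by case=> [_ [_ [/QK Qp _]]]; apply: Q0; exact: Qp.
- by [].
Qed.

Definition set_edge (x : E) (b : bool) (f : E -> bool) : E -> bool :=
  fun y => if y == x then b else f y.

Lemma determined_by_set_edge (x : E) K Q b :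
  determined_by (x :: K) Q -> determined_by K (Q \o set_edge x b).
Proof.
move=> QK f g fg; apply: QK => y; rewrite inE /set_edge.
by case: eqP => //= _ yK; rewrite fg.
Qed.

Lemma local_event_cons (x : E) (B1 B0 : seq E) (Q : (E -> bool) -> Prop) d :
  local_event B1 B0 Q d =
  local_event (x :: B1) B0 (Q \o set_edge x true) d `|`
  local_event B1 (x :: B0) (Q \o set_edge x false) d.
Proof.
have set_edge_id (f : E -> bool) : set_edge x (f x) f = f.
  by apply: funext => y; rewrite /set_edge; case: eqP => // ->.
apply/funext => p; apply/propext; rewrite /local_event /setU /=.
by rewrite -[in Q p.1](set_edge_id p.1); case: (p.1 x) => /=; intuition.
Qed.

Lemma local_event_cons_disjoint (x : E) (B1 B0 : seq E) (Q1 Q0 : (E -> bool) -> Prop) d :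
  local_event (x :: B1) B0 Q1 d `&` local_event B1 (x :: B0) Q0 d = set0.
Proof.
apply/funext => p; apply/propext; split => //; rewrite /local_event /=.
by case: (p.1 x) => /=; intuition.
Qed.

Lemma measurable_local_event K : forall Q, determined_by K Q ->
  forall B1 B0 d, measurable (local_event B1 B0 Q d).
Proof.
elim: K => [|x K IH] Q QK B1 B0 d.
  rewrite local_event_const //.
  by case: ifP => _; [exact: measurable_joint_cyl | exact: measurable0].
rewrite (local_event_cons x); apply: measurableU; apply: IH;
  exact: determined_by_set_edge.
Qed.

Lemma measurable_determined K (Q : (E -> bool) -> E -> Prop) :
  (forall d, determined_by K (Q^~ d)) -> measurable [set p : JT E | Q p.1 p.2].
Proof.
move=> QK.
pose F n := if unpickle n is Some d then local_event [::] [::] (Q^~ d) d else set0.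
rewrite (_ : [set p | _] = \bigcup_n F n).
  apply: bigcupT_measurable => n; rewrite /F; case: (unpickle n) => // d.
  exact: measurable_local_event.
apply/funext => p; apply/propext; split => [Qp|[n _]].
  by exists (pickle p.2) => //; rewrite /F pickleK.
by rewrite /F; case: (unpickle n) => // d [_ [_ [Qp pd]]]; rewrite /= pd.
Qed.

Lemma measurable_second_pred (P : pred E) : measurable [set p : JT E | P p.2].
Proof. by apply: (@measurable_determined [::] (fun _ d => P d)) => d f g. Qed.

Lemma setring_finitary_events : setring finitary_events.
Proof.
split.
- by exists [::].
- move=> B1 B2 [K1 B1K] [K2 B2K]; exists (K1 ++ K2) => f g fg [B1f|B2f].
    by left; apply: B1K B1f => x xK; apply: fg; rewrite mem_cat xK.
  by right; apply: B2K B2f => x xK; apply: fg; rewrite mem_cat xK orbT.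
- move=> B1 B2 [K1 B1K] [K2 B2K]; exists (K1 ++ K2) => f g fg [B1f nB2f]; split.
    by apply: B1K B1f => x xK; apply: fg; rewrite mem_cat xK.
  move=> B2g; apply: nB2f; apply: B2K B2g => x xK; apply/esym/fg.
  by rewrite mem_cat xK orbT.
Qed.

Lemma measurable_sub_finitary (A : set (Cfg E)) : measurable A -> <<sr finitary_events>> A.
Proof.
apply: smallest_sub => [|B [i [b ->]]]; last first.
  by apply: sub_g_sigma_ring; exists [:: i] => f g fg; rewrite /= fg ?mem_head.
have [sr0 srD srU] := smallest_sigma_ring finitary_events.
split => // B srB; apply: srD => //.
by apply: sub_g_sigma_ring; exists [::].
Qed.

End JointEvents.

Section ScaledComparison.
Variables (R : realType) (d : measure_display) (T : measurableType d).
Variables (nu : probability T R) (S : Type) (f g : T -> S) (k : R).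

Definition scaled_le_class : set (set S) :=
  [set B | [/\ measurable (f @^-1` B), measurable (g @^-1` B)
             & (k%:E * nu (g @^-1` B) <= nu (f @^-1` B))%E]].

Lemma lee_scale_cvg (a b : (set T)^nat) (A B : set T) :
  measurable A -> measurable B ->
  (forall n, measurable (a n)) -> (forall n, measurable (b n)) ->
  nu \o a @ \oo --> nu A -> nu \o b @ \oo --> nu B ->
  (forall n, (k%:E * nu (a n) <= nu (b n))%E) -> (k%:E * nu A <= nu B)%E.
Proof.
have finE X : measurable X -> (fine (nu X))%:E = nu X.
  by move=> mX; rewrite fineK ?fin_num_measure.
move=> mA mB ma mb; rewrite -(finE _ mA) -(finE _ mB).
move=> /fine_cvgP[_ ca] /fine_cvgP[_ cb] ab.
rewrite -EFinM lee_fin; apply: ler_cvg_to (cvgMl_tmp (a := k) ca) cb _.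
by apply: nearW => n /=; have := ab n; rewrite -(finE _ (ma n)) -(finE _ (mb n)) -EFinM.
Qed.

Lemma scaled_le_class_ndseq : ndseq_closed scaled_le_class.
Proof.
move=> F ndF FC; rewrite /scaled_le_class /= !preimage_bigcup.
have mf i : measurable (f @^-1` F i) by have [] := FC i.
have mg i : measurable (g @^-1` F i) by have [] := FC i.
have le i : (k%:E * nu (g @^-1` F i) <= nu (f @^-1` F i))%E by have [] := FC i.
have nd (h : T -> S) : nondecreasing_seq (fun i => h @^-1` F i).
  by move=> m n mn; have /subsetPset mn' := ndF _ _ mn; apply/subsetPset => x /mn'.
have mfF := bigcupT_measurable _ mf; have mgF := bigcupT_measurable _ mg.
split => //; apply: (lee_scale_cvg mgF mfF mg mf _ _ le).
- exact: nondecreasing_cvg_mu mg mgF (nd g).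
- exact: nondecreasing_cvg_mu mf mfF (nd f).
Qed.

Lemma scaled_le_class_niseq : niseq_closed scaled_le_class.
Proof.
move=> F niF FC; rewrite /scaled_le_class /= !preimage_bigcap.
have mf i : measurable (f @^-1` F i) by have [] := FC i.
have mg i : measurable (g @^-1` F i) by have [] := FC i.
have le i : (k%:E * nu (g @^-1` F i) <= nu (f @^-1` F i))%E by have [] := FC i.
have ni (h : T -> S) : nonincreasing_seq (fun i => h @^-1` F i).
  by move=> m n mn; have /subsetPset mn' := niF _ _ mn; apply/subsetPset => x /mn'.
have fin (h : T -> S) : measurable (h @^-1` F 0%N) -> (nu (h @^-1` F 0%N) < +oo)%E.
  by move=> mh; have /fin_numPlt/andP[_ ->] := fin_num_measure nu _ mh.
have mfF := bigcapT_measurable mf; have mgF := bigcapT_measurable mg.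
split => //; apply: (lee_scale_cvg mgF mfF mg mf _ _ le).
- exact: nonincreasing_cvg_mu (fin _ (mg 0%N)) mg mgF (ni g).
- exact: nonincreasing_cvg_mu (fin _ (mf 0%N)) mf mfF (ni f).
Qed.

Lemma scaled_le_class_monotone : monotone scaled_le_class.
Proof. by split; [exact: scaled_le_class_ndseq | exact: scaled_le_class_niseq]. Qed.

End ScaledComparison.

Section UstLaw.
Variables (R : realType) (V : countType) (E : pointedCountType).
Variables (src tgt : E -> V) (c : E -> R) (adj : V -> seq E).
Hypothesis adj_incident : forall u, uniq (adj u) /\
  forall x, (x \in adj u) = (src x == u) || (tgt x == u).
Variables (e : E) (o : bool).
Local Notation x0 := (Defs.tail src tgt e o).
Local Notation y0 := (Defs.head src tgt e o).
Hypothesis x0y0 : x0 != y0.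
Hypothesis c_gt0 : forall x, 0 < c x.

(* The joint law of [(T, D(T, e))], [T ~ UST_{G_W}], evaluated at an event [X];
   restricting [d] to the edges at [e^-] loses nothing by [Dedge_adj]. *)
Definition ust_law (W : seq V) (X : set (JT E)) : R :=
  (\sum_(t : {set seq_sub (induced_edges src tgt adj W)} | spanning_treeb t)
     \sum_(d <- adj x0 | `[< Dedge e o t d /\ X (cfg_of t, d) >]) weight c t) /
  \sum_(t : {set seq_sub (induced_edges src tgt adj W)} | spanning_treeb t) weight c t.

Lemma Dedge_adj W (t : {set seq_sub (induced_edges src tgt adj W)}) d :
  Dedge e o t d -> d \in adj x0.
Proof.
move=> /(Dedge_first_edge x0y0) /first_edge_split [z [_ J _]].
by rewrite (adj_incident x0).2; case: J => [[-> _]|[_ ->]]; rewrite eqxx ?orbT.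
Qed.

Lemma ust_law_joint_cyl W B1 B0 d :
  ust_law W (joint_cyl B1 B0 d) = ust_pair_cyl src tgt c adj W e o B1 B0 d.
Proof.
rewrite /ust_law /ust_pair_cyl; congr (_ / _).
rewrite big_mkcond [RHS]big_mkcond; apply: eq_bigr => t _.
rewrite /spanning_treeb; case: asboolP => ST; last by rewrite asboolF // => -[].
rewrite big_mkcond /=; case: (asboolP (all (cfg_of t) B1 /\ ~~ has (cfg_of t) B0 /\
    Dedge e o t d)) => [[B1t [B0t Dd]]|NB].
  rewrite asboolT // (bigD1_seq d (Dedge_adj Dd) (adj_incident x0).1) /= asboolT //.
  rewrite big1 ?addr0 // => d' d'd; rewrite asboolF // => -[_ [_ [_ /= d'_d]]].
  by rewrite d'_d eqxx in d'd.
rewrite asboolF; last by case=> _ [? [? ?]]; apply: NB.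
rewrite big1 // => d' _; rewrite asboolF // => -[Dd' [? [? /= d'_d]]].
by subst d'; apply: NB.
Qed.

Lemma ust_law0 W : ust_law W set0 = 0.
Proof.
rewrite /ust_law big1 ?mul0r // => t _.
by rewrite big1 // => d; rewrite asboolF // => -[].
Qed.

Lemma ust_lawU W (X Y : set (JT E)) :
  X `&` Y = set0 -> ust_law W (X `|` Y) = ust_law W X + ust_law W Y.
Proof.
move=> XY0; rewrite /ust_law -mulrDl -big_split; congr (_ / _); apply: eq_bigr => t _.
rewrite !(big_mkcond (fun d => `[< _ >])) -big_split; apply: eq_bigr => d _ /=.
have nXY : ~ (X (cfg_of t, d) /\ Y (cfg_of t, d)).
  by move=> XYp; have : (X `&` Y) (cfg_of t, d) by []; rewrite XY0.
case: (asboolP (Dedge e o t d /\ X _)) => [[Dd Xp]|NX];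
  case: (asboolP (Dedge e o t d /\ Y _)) => [[Dd' Yp]|NY].
- by case: nXY.
- by rewrite asboolT ?addr0 //; split => //; left.
- by rewrite asboolT ?add0r //; split => //; right.
- by rewrite asboolF ?addr0 // => -[Dd [Xp|Yp]]; [apply: NX|apply: NY].
Qed.

Variables (Vn : nat -> seq V) (nu : probability (JT E) R).
Hypothesis nu_limit : is_FUSF_pair_limit src tgt c adj Vn e o nu.

Definition ust_law_cvg (X : set (JT E)) : Prop :=
  (fun n => ust_law (Vn n) X) @ \oo --> (fine (nu X) : R^o).

Lemma ust_law_cvg_joint_cyl B1 B0 d : ust_law_cvg (joint_cyl B1 B0 d).
Proof.
have := @nu_limit B1 B0 d.
rewrite -(fineK (fin_num_measure nu _ (measurable_joint_cyl B1 B0 d))).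
case/fine_cvgP => _ cvg_pair; rewrite /ust_law_cvg.
by under eq_fun do rewrite ust_law_joint_cyl.
Qed.

Lemma ust_law_cvg0 : ust_law_cvg set0.
Proof.
rewrite /ust_law_cvg measure0 /=.
by under eq_fun do rewrite ust_law0; exact: (@cvg_cst R^o).
Qed.

Lemma ust_law_cvgU X Y : measurable X -> measurable Y -> X `&` Y = set0 ->
  ust_law_cvg X -> ust_law_cvg Y -> ust_law_cvg (X `|` Y).
Proof.
move=> mX mY XY0 cX cY; rewrite /ust_law_cvg measureU // fineD ?fin_num_measure //.
by under eq_fun do rewrite ust_lawU //; exact: cvgD.
Qed.

Lemma ust_law_cvg_local K : forall Q, determined_by K Q ->
  forall B1 B0 d, ust_law_cvg (local_event B1 B0 Q d).
Proof.
elim: K => [|x K IH] Q QK B1 B0 d.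
  rewrite local_event_const //; case: ifP => _.
    exact: ust_law_cvg_joint_cyl.
  exact: ust_law_cvg0.
have QxK b : determined_by K (Q \o set_edge x b) by exact: determined_by_set_edge.
rewrite (local_event_cons x).
apply: ust_law_cvgU; try exact: local_event_cons_disjoint;
  by [apply: measurable_local_event | apply: IH].
Qed.

Lemma ust_law_cvg_on (l : seq E) K (Q : (E -> bool) -> E -> Prop) :
  (forall d, determined_by K (Q^~ d)) -> uniq l ->
  ust_law_cvg [set p | p.2 \in l /\ Q p.1 p.2].
Proof.
move=> QK; elim: l => [|d l IH] /=.
  move=> _; rewrite (_ : [set p | _] = set0); first exact: ust_law_cvg0.
  by apply/funext => p; apply/propext; split => -[].
case/andP => dl ul.
have lQK d' : determined_by K (fun f => d' \in l /\ Q f d').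
  by move=> f g fg [? /QK]; auto.
set Xl := [set p | p.2 \in l /\ Q p.1 p.2].
rewrite (_ : [set p | _] = local_event [::] [::] (Q^~ d) d `|` Xl).
  apply: ust_law_cvgU; [exact: measurable_local_event | exact: measurable_determined lQK
    | | exact: ust_law_cvg_local | exact: IH].
  apply/funext => p; apply/propext; split => // -[[_ [_ [_ pd]]] [pl _]].
  by rewrite -pd pl in dl.
apply/funext => p; apply/propext; rewrite /local_event /setU /= inE.
split => [[/orP[/eqP->|pl] Qp]|[[_ [_ [Qp ->]]]|[pl Qp]]];
  rewrite ?eqxx ?pl ?orbT; by [left | right |].
Qed.

Lemma ust_law_adj W X : ust_law W X = ust_law W [set p | p.2 \in adj x0 /\ X p].
Proof.
rewrite /ust_law; congr (_ / _); apply: eq_bigr => t _; apply: eq_bigl => d.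
by apply/asboolP/asboolP => [[Dd Xp]|[Dd [_ Xp]]]; do !split => //; exact: Dedge_adj Dd.
Qed.

Lemma nu_joint_cyl_notin_adj d : d \notin adj x0 -> nu (joint_cyl [::] [::] d) = 0%E.
Proof.
move=> dL; have cvg0 : (fun=> 0 : R^o) @ \oo --> (fine (nu (joint_cyl [::] [::] d)) : R^o).
  have := @ust_law_cvg_joint_cyl [::] [::] d; rewrite /ust_law_cvg.
  suff -> : (fun n => ust_law (Vn n) (joint_cyl [::] [::] d)) = fun=> 0 by [].
  apply/funext => n; rewrite ust_law_adj -(ust_law0 (Vn n)); congr ust_law.
  by apply/funext => p; apply/propext; split => // -[pL [_ [_ pd]]]; rewrite -pd pL in dL.
rewrite -[LHS](fineK (fin_num_measure nu _ (measurable_joint_cyl _ _ _))).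
by rewrite (cvg_unique _ cvg0 (@cvg_cst R^o _ _ _ _)).
Qed.

Lemma nu_second_notin_adj : nu [set p : JT E | p.2 \notin adj x0] = 0%E.
Proof.
pose F n := if unpickle n is Some d then
  if d \in adj x0 then set0 else joint_cyl [::] [::] d else set0.
have mF n : measurable (F n).
  rewrite /F; case: (unpickle n) => // d.
  by case: ifP => _; [exact: measurable0 | exact: measurable_joint_cyl].
have mL := measurable_second_pred (fun d => d \notin adj x0).
apply/eqP; rewrite eq_le measure_ge0 andbT.
apply: le_trans (measure_sigma_subadditive nu mF mL _) _.
  by move=> p pL; exists (pickle p.2) => //; rewrite /F pickleK (negbTE pL).
rewrite eseries0 // => n _ _; rewrite /F; case: (unpickle n) => [d|]; last exact: measure0.
by case: ifPn => [_|/nu_joint_cyl_notin_adj //]; exact: measure0.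
Qed.

Lemma nu_second_adj (X : set (JT E)) :
  measurable X -> nu X = nu [set p : JT E | p.2 \in adj x0 /\ X p].
Proof.
move=> mX; set L' := [set p : JT E | p.2 \notin adj x0].
have mL' : measurable L' := measurable_second_pred (fun d => d \notin adj x0).
have mLX : measurable [set p : JT E | p.2 \in adj x0 /\ X p].
  exact: measurableI (measurable_second_pred (fun d => d \in adj x0)) mX.
apply/eqP; rewrite eq_le [X in _ && X]le_measure ?inE // ?andbT => [|p []//].
apply: le_trans (le_measure _ _ _ (_ : X `<=` [set p | p.2 \in adj x0 /\ X p] `|` L')) _.
- by rewrite inE.
- by rewrite inE; exact: measurableU mLX mL'.
- by move=> p Xp; case: (boolP (p.2 \in adj x0)) => pL; [left|right].
have L'0 : (nu L' <= 0)%E by rewrite nu_second_notin_adj.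
by apply: le_trans (measureU2 nu mLX mL') _; rewrite -[leRHS]adde0; exact: leeD.
Qed.

Lemma ust_law_cvg_determined K (Q : (E -> bool) -> E -> Prop) :
  (forall d, determined_by K (Q^~ d)) -> ust_law_cvg [set p | Q p.1 p.2].
Proof.
move=> QK; rewrite /ust_law_cvg nu_second_adj; last exact: measurable_determined QK.
under eq_fun do rewrite ust_law_adj.
exact: ust_law_cvg_on QK (adj_incident x0).1.
Qed.

Lemma determined_by_update K (A : (E -> bool) -> Prop) d :
  determined_by K A -> determined_by (e :: K) (fun f => A (update src tgt e o f d)).
Proof.
move=> AK f g fg; rewrite /update (fg e (mem_head _ _)).
have fgK : {in K, f =1 g} by move=> x xK; apply: fg; rewrite inE xK orbT.
by case: ifP => _; apply: AK => x xK /=; rewrite ?fgK.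
Qed.

Lemma ust_law_update_le W (A : (E -> bool) -> Prop) :
  c e * ust_law W [set p | A (update src tgt e o p.1 p.2)]
  <= cond c adj x0 * ust_law W [set p | A p.1].
Proof.
rewrite /ust_law !mulrA; apply: ler_wpM2r; last exact: sum_update_le.
by rewrite invr_ge0; apply: sumr_ge0 => t _; exact: weight_ge0.
Qed.

Lemma local_update_le K (A : (E -> bool) -> Prop) : determined_by K A ->
  ((c e / cond c adj x0)%:E * nu [set p | A (update src tgt e o p.1 p.2)]
   <= nu [set p | A p.1])%E.
Proof.
move=> AK; set XU := [set p : JT E | _]; set XA := [set p : JT E | A p.1].
have AUK d : determined_by (e :: K) (fun f => A (update src tgt e o f d)).
  exact: determined_by_update.
have mXU : measurable XU := measurable_determined AUK.
have mXA : measurable XA := @measurable_determined _ K (fun f _ => A f) (fun=> AK).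
have cond_pos := cond_gt0 adj_incident e o c_gt0.
have lim : c e * fine (nu XU) <= cond c adj x0 * fine (nu XA).
  have cvgU : ust_law_cvg XU := ust_law_cvg_determined AUK.
  have cvgA : ust_law_cvg XA := @ust_law_cvg_determined K (fun f _ => A f) (fun=> AK).
  apply: ler_cvg_to (cvgMl_tmp (a := c e) cvgU) (cvgMl_tmp (a := cond c adj x0) cvgA) _.
  exact: nearW (fun n => ust_law_update_le _ _).
rewrite -(fineK (fin_num_measure nu _ mXU)) -(fineK (fin_num_measure nu _ mXA)).
by rewrite -EFinM lee_fin mulrAC ler_pdivrMr // [leRHS]mulrC.
Qed.

Lemma finitary_sub_update_class :
  @finitary_events E `<=` scaled_le_class nu fst
    (fun p : JT E => update src tgt e o p.1 p.2) (c e / cond c adj x0).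
Proof.
move=> B [K BK]; split.
- exact: (@measurable_determined _ K (fun f _ => B f) (fun=> BK)).
- apply: (@measurable_determined _ (e :: K) (fun f d => B (update src tgt e o f d))).
  by move=> d; exact: determined_by_update.
- exact (local_update_le BK).
Qed.

End UstLaw.

Theorem corollary2p4 (R : realType) (V : countType) (E : pointedCountType)
  (src tgt : E -> V) (c : E -> R) (adj : V -> seq E)
  (Hnet : is_network src tgt c adj)
  (Vn : nat -> seq V) (Hex : is_exhaustion src tgt Vn)
  (e : E) (o : bool)
  (nu : probability (JT E) R)
  (Hnu : is_FUSF_pair_limit src tgt c adj Vn e o nu)
  (A : set (Cfg E)) (HA : measurable A) :
  ((c e / cond c adj (tail src tgt e o))%:E *
     nu [set p | A (update src tgt e o p.1 p.2)]
   <= nu [set p | A p.1])%E.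
Proof.
case: Hnet => c_gt0 adj_incident _ _.
have [loop|x0y0] := eqVneq (Defs.tail src tgt e o) (Defs.head src tgt e o).
  rewrite (_ : [set p | _] = [set p | A p.1]); last first.
    by apply/funext => p; rewrite /update loop eqxx.
  have cond_pos := cond_gt0 adj_incident e o c_gt0.
  by rewrite -[leRHS]mul1e lee_wpmul2r // lee_fin ler_pdivrMr // mul1r cond_ge.
have := monotone_setring_sub_g_sigma_ring (scaled_le_class_monotone _ _ _ _)
  (@setring_finitary_events E) (finitary_sub_update_class adj_incident x0y0 c_gt0 Hnu).
by move=> /(_ A (measurable_sub_finitary HA)) [].
Qed.
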